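(* Let $V\subset\mathbb{R}^d$ be a finite antichain, $p\in S_V$, and let $F$ be an $i$-flat of $S_V$. Then $p\in F$ if and only if there exist $v\in V_F$ and $q\in S_V$ such that $q\rhd_i v$ and $v\le p\le q$.
   Context: For $x,y\in\mathbb{R}^d$, $x\le y$ (dominance order) means $x_i\le y_i$ for all $i$; $y\rhd x$ means $y_i>x_i$ for all $i$; $y\rhd_i x$ means $y_i=x_i$ and $y_j>x_j$ for all $j\neq i$. $V\subset\mathbb{R}^d$ is a finite antichain in the dominance order (elements are called minima). The orthogonal surface $S_V$ is the topological boundary of $\langle V\rangle=\{x: x\ge v\text{ for some }v\in V\}$; equivalently $p\in S_V$ iff there is $v\in V$ with $v\le p$ and no $w\in V$ with $p\rhd w$. Flats: $U_i(v)=\{p\in S_V: p\rhd_i v\}$; for $v,w\in V$ put $v\sim_i w$ iff $U_i(v)\cap U_i(w)\neq\emptyset$, and let $\sim_i^c$ be the reflexive–transitive closure; the $i$-flat of $v$ is $F_i(v)=\overline{\bigcup_{w\sim_i^c v}U_i(w)}$ (topological closure), and an $i$-flat is any set of this form. For an $i$-flat $F$ let $V_F=F\cap V$ (the $\sim_i^c$-class of minima defining $F$). *)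

From HB Require Import structures.
From mathcomp Require Import all_boot all_order all_algebra.
From mathcomp Require Import all_classical all_reals all_analysis.
From Stdlib Require Import Relation_Operators.
Set Implicit Arguments. Unset Strict Implicit. Unset Printing Implicit Defensive.
Import Order.TTheory GRing.Theory Num.Theory.
Import numFieldNormedType.Exports.
Local Open Scope classical_set_scope.
Local Open Scope ring_scope.

Section OrthSurf.
Context {R : realType} {d : nat}.
Notation pt := 'rV[R]_d.

Definition dle (x y : pt) : Prop := forall j : 'I_d, x ord0 j <= y ord0 j.
Definition dgt (y x : pt) : Prop := forall j : 'I_d, x ord0 j < y ord0 j.
Definition dgt_i (i : 'I_d) (y x : pt) : Prop :=
  y ord0 i = x ord0 i /\ forall j : 'I_d, j != i -> x ord0 j < y ord0 j.

Definition finite_antichain (V : set pt) : Prop :=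
  finite_set V /\ forall v w, V v -> V w -> dle v w -> v = w.

Definition surface (V : set pt) : set pt :=
  [set p | (exists2 v, V v & dle v p) /\ ~ (exists2 w, V w & dgt p w)].

Definition Uflat (V : set pt) (i : 'I_d) (v : pt) : set pt :=
  [set p | surface V p /\ dgt_i i p v].

Definition sim_i (V : set pt) (i : 'I_d) (v w : pt) : Prop :=
  V v /\ V w /\ Uflat V i v `&` Uflat V i w !=set0.

Definition simc_i (V : set pt) (i : 'I_d) : pt -> pt -> Prop :=
  clos_refl_trans pt (sim_i V i).

Definition iflat_of (V : set pt) (i : 'I_d) (v : pt) : set pt :=
  @closure pt (\bigcup_(w in [set w | V w /\ simc_i V i v w]) Uflat V i w).

Definition is_iflat (V : set pt) (i : 'I_d) (F : set pt) : Prop :=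
  exists2 v, V v & F = iflat_of V i v.

Definition minima_of (V F : set pt) : set pt := F `&` V.

End OrthSurf.

(* Two facts drive the proof. First, if [v <= p <= q] with [q] on the surface
   and [q |>_i v], then the points of the segment from [p] to [q] other than
   [p] lie in [U_i(v)], so [p] is in the closure of [U_i(v)]. Second, [V] is
   finite, so near a point [z] every minimum agrees with [z] in a coordinate or
   is separated from it by a fixed gap [e]; a point of [U_i(w)] within [e] of
   [z] then forces [w <= z] with [w_i = z_i], and raising [z] coordinatewise to
   such a point stays on the surface. Applied at [z = p] this gives the
   witnesses [w] and [q]; applied at [z = v] together with the antichain
   property it shows that a minimum [v] in [F] lies in the class defining
   [F], so the closure of [U_i(v)] is contained in [F]. *)
From HB Require Import structures.
From mathcomp Require Import all_boot all_order all_algebra.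
From mathcomp Require Import all_classical all_reals all_analysis.
From mathcomp Require Import lra.
Set Implicit Arguments. Unset Strict Implicit. Unset Printing Implicit Defensive.
Import Order.TTheory GRing.Theory Num.Theory.
Import numFieldNormedType.Exports.
Local Open Scope classical_set_scope.
Local Open Scope ring_scope.

Lemma seq_gap (R : realDomainType) (s : seq R) :
  exists2 e : R, 0 < e & forall r, r \in s -> r = 0 \/ e <= `|r|.
Proof.
elim: s => [|r s [e e0 He]]; first by exists 1.
have [->|r0] := eqVneq r 0.
  by exists e => // t; rewrite inE => /orP[/eqP ->|/He]; [left|].
exists (Num.min e `|r|); first by rewrite lt_min e0 normr_gt0.
move=> t; rewrite inE => /orP[/eqP ->|/He [->|et]]; [|by left|].
- by right; rewrite ge_min lexx orbT.
- by right; rewrite ge_min et.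
Qed.

Section SurfaceFlats.
Context {R : realType} {d : nat} {V : set 'rV[R]_d}.
Notation pt := 'rV[R]_d.

Definition gap (z : pt) (e : R) : Prop :=
  forall u, V u -> forall k : 'I_d,
    u ord0 k = z ord0 k \/ e <= `|u ord0 k - z ord0 k|.

Lemma finite_gap (z : pt) : finite_set V -> exists2 e : R, 0 < e & gap z e.
Proof.
rewrite /gap => /finite_seqP [s ->].
pose f (u : pt) (k : 'I_d) := u ord0 k - z ord0 k.
have [e e0 He] := seq_gap [seq f u k | u <- s, k <- enum 'I_d].
exists e => // u su k.
have [/eqP|] := He _ (allpairs_f f su (mem_enum _ k)).
  by rewrite subr_eq0 => /eqP; left.
by right.
Qed.

Lemma dgt_i_dle (i : 'I_d) (q v : pt) : dgt_i i q v -> dle v q.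
Proof.
move=> [qi qj] k; have [->|/qj/ltW //] := eqVneq k i.
by rewrite qi.
Qed.

Lemma closure_Uflat_between (i : 'I_d) (v p q : pt) :
  V v -> surface V q -> dgt_i i q v -> dle v p -> dle p q ->
  closure (Uflat V i v) p.
Proof.
move=> Vv [_ noq] [qi qj] vp pq B /nbhs_ballP [e e0 pB].
set N := `|q - p|.
set eps := Num.min 1 (e / (N + 1)).
have N1 : 0 < N + 1 by rewrite ltr_wpDl ?normr_ge0.
have eps0 : 0 < eps by rewrite lt_min ltr01 divr_gt0.
have eps1 : eps <= 1 by rewrite ge_min lexx.
have epse : eps <= e / (N + 1) by rewrite ge_min lexx orbT.
set r := p + eps *: (q - p).
have rE j : r ord0 j = p ord0 j + eps * (q ord0 j - p ord0 j) by rewrite !mxE.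
have pi : p ord0 i = v ord0 i by apply/eqP; rewrite eq_le vp -qi pq.
exists r; split; last first.
  apply: pB; rewrite -ball_normE /ball_ /= /r opprD addrA subrr add0r normrN.
  rewrite normrZ ger0_norm; last exact: ltW.
  apply: (@lt_le_trans _ _ (eps * (N + 1))); first by rewrite ltr_pM2l // ltrDl.
  by rewrite -(divfK (lt0r_neq0 N1) e) ler_pM2r.
split; last first.
  split; first by rewrite rE pi qi subrr mulr0 addr0.
  by move=> j /qj; have := vp j; have := pq j; rewrite rE; nra.
split; first by exists v => // j; rewrite rE; have := vp j; have := pq j; nra.
move=> [w Vw rw]; apply: noq; exists w => // j.
by have := rw j; rewrite rE; have := pq j; nra.
Qed.

Lemma gap_dgt_i_dle (i : 'I_d) (e : R) (z w x : pt) :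
  gap z e -> V w -> dgt_i i x w -> (forall k, `|z ord0 k - x ord0 k| < e) ->
  w ord0 i = z ord0 i /\ dle w z.
Proof.
move=> ze Vw [xi xj] zx.
have wi : w ord0 i = z ord0 i.
  case: (ze w Vw i) => // /le_lt_trans; rewrite -xi distrC => /(_ _ (zx i)).
  by rewrite ltxx.
split => // k; have [->|ki] := eqVneq k i; first by rewrite wi.
case: leP => // zw; exfalso.
case: (ze w Vw k) => [wz|]; first by move: zw; rewrite wz ltxx.
rewrite gtr0_norm ?subr_gt0 //; have := zx k; rewrite ltr_norml => /andP[].
have := xj k ki; lra.
Qed.

Lemma surface_max_near (e : R) (p x : pt) :
  gap p e -> surface V x -> (forall k, `|p ord0 k - x ord0 k| < e) ->
  surface V (map2_mx Num.max p x).
Proof.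
move=> pe [[w Vw wx] nox] px; split.
  by exists w => // k; rewrite mxE le_max (wx k) orbT.
move=> [u Vu qu]; apply: nox; exists u => // k.
case: ltP => // xu; exfalso.
have := qu k; rewrite mxE lt_max => /orP[up|]; last by rewrite ltNge xu.
case: (pe u Vu k) => [upk|]; first by move: up; rewrite upk ltxx.
rewrite ltr0_norm ?subr_lt0 //; have := px k; rewrite ltr_norml => /andP[].
lra.
Qed.

Lemma iflat_approx (i : 'I_d) (v0 z : pt) (e : R) : 0 < e ->
  iflat_of V i v0 z ->
  exists w x, [/\ V w, simc_i V i v0 w, Uflat V i w x &
                  forall k, `|z ord0 k - x ord0 k| < e].
Proof.
move=> e0 /(_ _ (nbhsx_ballx z e e0)) [x [[w [Vw v0w] wx] [_ zx]]].
by exists w, x; split => // k; apply: zx.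
Qed.

Lemma closure_Uflat_sub_iflat (i : 'I_d) (v0 w : pt) :
  V w -> simc_i V i v0 w -> closure (Uflat V i w) `<=` iflat_of V i v0.
Proof. by move=> Vw v0w; apply: closureS => y wy; exists w. Qed.

End SurfaceFlats.

Theorem lemma4p3 (R : realType) (d : nat) (V : set 'rV[R]_d)
    (hV : finite_antichain V) (p : 'rV[R]_d) (hp : surface V p)
    (i : 'I_d) (F : set 'rV[R]_d) (hF : is_iflat V i F) :
  F p <-> exists v q, minima_of V F v /\ surface V q /\ dgt_i i q v /\
                      dle v p /\ dle p q.
Proof.
case: hV => finV antiV; case: hF => v0 V0 ->; split.
- move=> Fp; have [e e0 pe] := finite_gap p finV.
  have [w [x [Vw v0w [xs wx] px]]] := iflat_approx e0 Fp.
  have [wi wp] := gap_dgt_i_dle pe Vw wx px.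
  have [xi xj] := wx.
  exists w, (map2_mx Num.max p x); split; last split; last split; last split.
  + split=> //; apply: (closure_Uflat_sub_iflat Vw v0w).
    exact: (closure_Uflat_between Vw xs wx (fun k => lexx _) (dgt_i_dle wx)).
  + exact: surface_max_near pe xs px.
  + split; first by rewrite mxE -wi xi maxxx.
    by move=> j /xj wxj; rewrite mxE lt_max wxj orbT.
  + exact: wp.
  + by move=> k; rewrite mxE le_max lexx.
- move=> [v [q [[Fv Vv] [qs [qv [vp pq]]]]]].
  have [e e0 ve] := finite_gap v finV.
  have [w [x [Vw v0w [_ wx] vx]]] := iflat_approx e0 Fv.
  have [_ /(antiV _ _ Vw Vv) wv] := gap_dgt_i_dle ve Vw wx vx.
  subst w; apply: (closure_Uflat_sub_iflat Vv v0w).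
  exact: (closure_Uflat_between Vv qs qv vp pq).
Qed.
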